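(* Let $n\ge 1$ and let $\rho$ be a representation of $A_n$ over a set $U$. Then the graph on $U$ whose edges are the pairs $\{x,y\}$ with $(x,y)\in\rho(r)$ contains a clique of size $n^2$.
   Context: For $n\ge 1$, $A_n$ denotes the finite integral symmetric relation algebra with atoms $1'$, $r$, $b_1,\dots,b_n$, all symmetric, in which a diversity cycle $xyz$ is mandatory (i.e. $x;y\ge z$) if and only if it involves $r$, and forbidden (i.e. $x;y\cdot z=0$) otherwise. A representation over a set $U$ is an embedding $\rho$ into the full relation algebra $\langle\mathcal P(U\times U),\cup,{}^c,\circ,{}^{-1},\mathrm{Id}_U\rangle$. *)

From mathcomp Require Import all_boot.
Set Implicit Arguments. Unset Strict Implicit. Unset Printing Implicit Defensive.

(* Atoms of A_n: None = 1' (identity), Some None = r, Some (Some i) = b_i. *)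
Definition atom (n : nat) : finType := option (option 'I_n).
Definition aId {n} : atom n := None.
Definition aR {n} : atom n := Some None.
Definition aB {n} (i : 'I_n) : atom n := Some (Some i).

Definition An (n : nat) := {set atom n}.

(* z <= x ; y for atoms x, y, z.  All atoms are symmetric; a diversity cycle
   xyz is allowed (mandatory) iff it involves r, forbidden otherwise. *)
Definition atom_le_comp {n} (x y z : atom n) : bool :=
  match x, y with
  | None, _ => z == y
  | _, None => z == x
  | Some _, Some _ =>
      match z with
      | None => x == y
      | Some _ => [|| x == aR, y == aR | z == aR]
      end
  end.

Definition atom_comp {n} (x y : atom n) : An n := [set z | atom_le_comp x y z].

(* Operations of A_n (complete atomic: composition distributes over joins). *)
Definition An_join {n} (A B : An n) : An n := A :|: B.
Definition An_compl {n} (A : An n) : An n := ~: A.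
Definition An_comp {n} (A B : An n) : An n :=
  \bigcup_(a in A) \bigcup_(b in B) atom_comp a b.
Definition An_conv {n} (A : An n) : An n := A.   (* all atoms symmetric *)
Definition An_one {n} : An n := [set aId].

(* A representation of A_n over U: an embedding into the full relation
   algebra on U (relations as U -> U -> Prop, equality = extensional). *)
Definition is_representation (n : nat) (U : Type) (rho : An n -> U -> U -> Prop) : Prop :=
  (forall A B, (forall x y, rho A x y <-> rho B x y) -> A = B) /\
  [/\       (forall A B x y, rho (An_join A B) x y <-> (rho A x y \/ rho B x y)),
      (forall A x y, rho (An_compl A) x y <-> ~ rho A x y),
      (forall A B x y, rho (An_comp A B) x y <-> exists z, rho A x z /\ rho B z y),
      (forall A x y, rho (An_conv A) x y <-> rho A y x)
    & (forall x y, rho An_one x y <-> x = y)].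

From mathcomp Require Import all_boot.
From Stdlib Require Import Classical ClassicalEpsilon.

Set Implicit Arguments.
Unset Strict Implicit.

(* Fix an r-edge (x, v).  Since r <= b_i ; b_k for all i, k, there is a point
   w_ik with b_i(x, w_ik) and b_k(w_ik, v); disjointness of the atoms makes the
   n^2 points w_ik distinct.  For two of them, w_ik and w_jl, the pair lies in
   b_i ; b_j <= 1' + r, and being distinct they are joined by r. *)

Lemma aR_in_comp_aB n (i k : 'I_n) : aR \in atom_comp (aB i) (aB k).
Proof. by rewrite inE /=. Qed.

Lemma comp_aB_subset n (i k : 'I_n) : atom_comp (aB i) (aB k) \subset [set aId; aR].
Proof. by apply/subsetP => -[[c|]|]; rewrite !inE. Qed.

Section Representation.

Variables (n : nat) (U : Type) (rho : An n -> U -> U -> Prop).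
Hypothesis rhoP : is_representation rho.

Lemma rho_setU (A B : An n) x y : rho (A :|: B) x y <-> rho A x y \/ rho B x y.
Proof. by case: rhoP => _ [rhoU _ _ _ _]; apply: rhoU. Qed.

Lemma rho_setT x y : rho setT x y.
Proof.
case: rhoP => _ [_ rhoC _ _ _].
rewrite -(setUCr setT); apply/rho_setU.
by case: (classic (rho setT x y)) => h; [left | right; apply/rhoC].
Qed.

Lemma rho_set0 x y : ~ rho set0 x y.
Proof.
case: rhoP => _ [_ rhoC _ _ _].
by rewrite -setCT => /rhoC; apply; apply: rho_setT.
Qed.

Lemma rho_subset (A B : An n) x y : A \subset B -> rho A x y -> rho B x y.
Proof. by move=> /setUidPr <- HA; apply/rho_setU; left. Qed.

Lemma rho_neq0 (A : An n) : A != set0 -> exists x y, rho A x y.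
Proof.
move/eqP=> nA; apply: NNPP => noA; apply: nA.
case: rhoP => rho_inj _; apply: rho_inj => x y; split => [HA|/rho_set0 //].
by case: noA; exists x, y.
Qed.

Lemma rho_atom_unique (a b : atom n) x y :
  rho [set a] x y -> rho [set b] x y -> a = b.
Proof.
case: rhoP => _ [_ rhoC _ _ _] Ha Hb; apply: NNPP => nab.
have : rho (~: [set b]) x y.
  by apply: rho_subset Ha; rewrite sub1set !inE; apply/eqP.
by move/rhoC; apply.
Qed.

Lemma rho_sym (A : An n) x y : rho A x y -> rho A y x.
Proof. by case: rhoP => _ [_ _ _ rhoV _] /(rhoV A y x). Qed.

Lemma rho_id x y : rho [set aId] x y -> x = y.
Proof. by case: rhoP => _ [_ _ _ _ rho1] /rho1. Qed.

Lemma rho_comp_atom (a b : atom n) x y z :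
  rho [set a] x z -> rho [set b] z y -> rho (atom_comp a b) x y.
Proof.
case: rhoP => _ [_ _ rhoM _ _] Ha Hb.
have : rho (An_comp [set a] [set b]) x y by apply/rhoM; exists z.
by rewrite /An_comp !big_set1.
Qed.

Lemma rho_comp_atomP (a b c : atom n) x y :
  c \in atom_comp a b -> rho [set c] x y ->
  exists z, rho [set a] x z /\ rho [set b] z y.
Proof.
case: rhoP => _ [_ _ rhoM _ _] cab Hc; apply/rhoM.
by rewrite /An_comp !big_set1; apply: rho_subset Hc; rewrite sub1set.
Qed.

Lemma r_clique_on_pairs :
  exists g : 'I_n * 'I_n -> U,
    injective g /\ forall p q, p != q -> rho [set aR] (g p) (g q).
Proof.
have [x [v xv]] : exists x v, rho [set aR] x v.
  by apply: rho_neq0; apply/set0Pn; exists aR; rewrite inE.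
have /choice [g gP] : forall p : 'I_n * 'I_n,
    exists w, rho [set aB p.1] x w /\ rho [set aB p.2] w v.
  by move=> p; apply: rho_comp_atomP xv; apply: aR_in_comp_aB.
have g_inj : injective g.
  move=> [i k] [j l] gij; have [xi iv] := gP (i, k); have [xj jv] := gP (j, l).
  rewrite /= gij in xi iv.
  by case: (rho_atom_unique xi xj) (rho_atom_unique iv jv) => -> [->].
exists g; split => // p q npq.
have gpq : rho [set aId; aR] (g p) (g q).
  apply: rho_subset (comp_aB_subset p.1 q.1) _.
  exact: rho_comp_atom (rho_sym (gP p).1) (gP q).1.
case/rho_setU: gpq => // /rho_id /g_inj epq.
by rewrite epq eqxx in npq.
Qed.

End Representation.

Theorem mainTheorem9 (n : nat) (U : Type) (rho : An n -> U -> U -> Prop) :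
  0 < n -> is_representation rho ->
  exists f : 'I_(n ^ 2) -> U,
    injective f /\
    (forall i j : 'I_(n ^ 2), i != j -> rho [set aR] (f i) (f j)).
Proof.
move=> _ rhoP; have [g [g_inj g_r]] := r_clique_on_pairs rhoP.
have card_pairs : n ^ 2 = #|{: 'I_n * 'I_n}| by rewrite card_prod card_ord mulnn.
pose f i := g (enum_val (cast_ord card_pairs i)).
have f_inj : injective f.
  by move=> i j /g_inj /enum_val_inj /cast_ord_inj.
exists f; split=> // i j nij; apply: g_r.
by apply: contra nij => /eqP /enum_val_inj /cast_ord_inj ->.
Qed.
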